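(* The principal eigenvalue function $p\mapsto\mu_1(p)$, $[2,+\infty)\to\mathbb{R}$, is continuous.
   Context: For $p\ge2$, let $W_c^{1,p}(0,1)=\{v\in W^{1,p}(0,1):v'(0)=v(1)=0\}$, $\eta_1(p)=\inf\left\{\frac{\int_0^1|v'|^p dr}{(p-1)\int_0^1 r^{p-2}|v|^p dr}: v\in W_c^{1,p}(0,1),v\not\equiv0\right\}$ and $\mu_1(p)=\eta_1(p)^{1/(p-1)}$; $\mu_1(p)$ is the principal eigenvalue of $-\left(|v'|^{p-2}v'\right)'=\mu^{p-1}(p-1)r^{p-2}|v|^{p-2}v$ in $(0,1)$, $v'(0)=v(1)=0$. *)

From Stdlib Require Import Reals Lra ClassicalEpsilon.
Open Scope R_scope.

(* x ^ a for x >= 0 and real a >= 0, with the convention 0 ^ 0 = 1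
   and 0 ^ a = 0 for a > 0. *)
Definition pw (x a : R) : R :=
  if Rlt_dec 0 x then Rpower x a
  else if Req_EM_T a 0 then 1 else 0.

Definition Rint (f : R -> R) (a b I : R) : Prop :=
  exists pr : Riemann_integrable f a b, RiemannInt pr = I.

Definition admissible (v dv : R -> R) : Prop :=
  (forall r, 0 <= r <= 1 -> derivable_pt_lim v r (dv r)) /\
  (forall r, 0 <= r <= 1 -> continuity_pt dv r) /\
  dv 0 = 0 /\ v 1 = 0 /\
  ~ (forall r, 0 <= r <= 1 -> v r = 0).

Definition Rayleigh (p x : R) : Prop :=
  exists v dv A B,
    admissible v dv /\
    Rint (fun r => pw (Rabs (dv r)) p) 0 1 A /\
    Rint (fun r => pw r (p - 2) * pw (Rabs (v r)) p) 0 1 B /\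
    x = A / ((p - 1) * B).

Definition is_lower_bound (E : R -> Prop) (m : R) : Prop :=
  forall x, E x -> m <= x.

Definition is_glb (E : R -> Prop) (m : R) : Prop :=
  is_lower_bound E m /\ (forall b, is_lower_bound E b -> b <= m).

Definition eta1 (p : R) : R :=
  epsilon (inhabits 0) (fun m => is_glb (Rayleigh p) m).

Definition mu1 (p : R) : R := Rpower (eta1 p) (1 / (p - 1)).

(* Normalise a test function [v] for exponent [p] to unit energy and replace it by the
   primitive [w], vanishing at 1, of the derivative [v'] clamped at a level [M].  Then
   [|v - w| <= M^(1-p)], and since [|w'| <= M] the q-energy of [w] is at most
   [th^2 + (M/th)^|q-p|], while its weighted q-mass falls short of the p-mass of [v] only by the
   contributions of [[0, rho]] and of the set where [|v| <= th], and by factors close to 1 coming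
   from [|v - w|] and from the change of exponent.  Choosing [M], then the cutoffs, then
   [|q - p|] small gives [(q-1) eta1 q <= (1+g) (p-1) eta1 p] uniformly for nearby exponents in both
   directions.  Hence [p |-> (p-1) eta1 p] is continuous, and so is [mu1] because [eta1 > 0]. *)

From Stdlib Require Import Reals Lra ClassicalEpsilon.
From Coquelicot Require Import Coquelicot.
Open Scope R_scope.

Lemma exp_le_compat x y : x <= y -> exp x <= exp y.
Proof. intros [H|<-]; [left; apply exp_increasing|]; lra. Qed.

Lemma Rpower_pos x a : 0 < Rpower x a.
Proof. apply exp_pos. Qed.

Lemma Rpower_inv_base x a : 0 < x -> Rpower (/ x) a = / Rpower x a.
Proof. intro; rewrite <- Rpower_Ropp; unfold Rpower; rewrite ln_Rinv by lra; f_equal; ring. Qed.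

Lemma Rpower_le_exp x a b : 0 < x <= 1 -> a <= b -> Rpower x b <= Rpower x a.
Proof.
intros Hx Hab. unfold Rpower. apply exp_le_compat.
assert (ln x <= 0) by (rewrite <- ln_1; apply ln_le; lra). nra.
Qed.

Lemma Rpower_le1 x a : 0 < x <= 1 -> 0 <= a -> Rpower x a <= 1.
Proof. intros. rewrite <- (Rpower_O x) by lra. apply Rpower_le_exp; lra. Qed.

Lemma Rpower_ge1 x a : 1 <= x -> 0 <= a -> 1 <= Rpower x a.
Proof. intros. rewrite <- (Rpower_O x) by lra. apply Rle_Rpower; lra. Qed.

Lemma Rpower_le_abs_exp K z e : 1 <= K -> / K <= z <= K -> Rpower z e <= Rpower K (Rabs e).
Proof.
intros HK Hz. assert (0 < / K) by (apply Rinv_0_lt_compat; lra).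
destruct (Rle_dec 0 e).
- rewrite Rabs_pos_eq by lra. apply Rle_Rpower_l; lra.
- rewrite Rabs_left by lra. replace e with (- - e) at 1 by ring.
  rewrite Rpower_Ropp, <- Rpower_inv_base by lra. apply Rle_Rpower_l; [lra|split].
  + apply Rinv_0_lt_compat; lra.
  + rewrite <- (Rinv_inv K). apply Rinv_le_contravar; lra.
Qed.

Lemma Rpower_ge_abs_exp s z e : 0 < s <= 1 -> s <= z <= / s -> Rpower s (Rabs e) <= Rpower z e.
Proof.
intros Hs Hz. assert (1 <= / s) by (rewrite <- Rinv_1; apply Rinv_le_contravar; lra).
rewrite <- (Rinv_inv s) at 1. rewrite Rpower_inv_base by (apply Rinv_0_lt_compat; lra).
replace e with (- - e) by ring. rewrite (Rpower_Ropp z), Rabs_Ropp.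
apply Rinv_le_contravar; [apply Rpower_pos|]. apply Rpower_le_abs_exp; [lra|].
rewrite Rinv_inv. lra.
Qed.

Lemma pw_Rpower x a : 0 < x -> pw x a = Rpower x a.
Proof. intro; unfold pw; destruct (Rlt_dec 0 x); [reflexivity|lra]. Qed.

Lemma pw_nonpos x a : a <> 0 -> x <= 0 -> pw x a = 0.
Proof.
intros; unfold pw; destruct (Rlt_dec 0 x); [lra|].
destruct (Req_EM_T a 0); [lra|reflexivity].
Qed.

Lemma pw_exp0 x : pw x 0 = 1.
Proof.
unfold pw; destruct (Rlt_dec 0 x); [apply Rpower_O; lra|].
destruct (Req_EM_T 0 0); [reflexivity|lra].
Qed.

Lemma pw_ge0 x a : 0 <= pw x a.
Proof.
unfold pw; destruct (Rlt_dec 0 x); [left; apply Rpower_pos|].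
destruct (Req_EM_T a 0); lra.
Qed.

Lemma pw_gt0 x a : 0 < x -> 0 < pw x a.
Proof. intro; rewrite pw_Rpower by lra; apply Rpower_pos. Qed.

Lemma pw_mul x y a : 0 <= x -> 0 <= y -> pw (x * y) a = pw x a * pw y a.
Proof.
intros Hx Hy. destruct (Req_dec a 0) as [->|Ha]; [rewrite !pw_exp0; ring|].
destruct Hx as [Hx|<-]; [|rewrite Rmult_0_l, (pw_nonpos 0); lra].
destruct Hy as [Hy|<-]; [|rewrite Rmult_0_r, (pw_nonpos 0); lra].
rewrite !pw_Rpower by nra. symmetry; apply Rpower_mult_distr; lra.
Qed.

Lemma pw_le_base x y a : 0 <= a -> 0 <= x <= y -> pw x a <= pw y a.
Proof.
intros Ha [[Hx|<-] Hxy]; destruct (Req_dec a 0) as [->|Ha0]; rewrite ?pw_exp0; try lra.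
- rewrite !pw_Rpower by lra. apply Rle_Rpower_l; lra.
- rewrite (pw_nonpos 0) by lra. apply pw_ge0.
Qed.

Lemma pw_le_exp x a b : 0 <= x <= 1 -> 0 <= a <= b -> pw x b <= pw x a.
Proof.
intros [[Hx|<-] Hx1] Hab.
- rewrite !pw_Rpower by lra. apply Rpower_le_exp; lra.
- destruct (Req_dec b 0) as [->|Hb]; [replace a with 0 by lra; lra|].
  rewrite (pw_nonpos 0 b) by lra. apply pw_ge0.
Qed.

Lemma pw_le1 x a : 0 <= x <= 1 -> 0 <= a -> pw x a <= 1.
Proof. intros. rewrite <- (pw_exp0 x). apply pw_le_exp; lra. Qed.

Lemma le_pw_of_ge th z p : 0 < th <= z -> 1 <= p -> z <= Rpower th (1 - p) * pw z p.
Proof.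
intros Hz Hp. rewrite pw_Rpower by lra.
replace (Rpower z p) with (z * Rpower z (p - 1))
  by (rewrite <- (Rpower_1 z) at 1 by lra; rewrite <- Rpower_plus; f_equal; ring).
replace (1 - p) with (- (p - 1)) by ring. rewrite Rpower_Ropp.
assert (Rpower th (p - 1) <= Rpower z (p - 1)) by (apply Rle_Rpower_l; lra).
pose proof (Rpower_pos th (p - 1)).
apply Rmult_le_reg_l with (Rpower th (p - 1)); [lra|].
rewrite <- Rmult_assoc, Rinv_r by lra. nra.
Qed.

Lemma young_threshold th z p : 0 < th -> 0 <= z -> 1 <= p -> z <= th + Rpower th (1 - p) * pw z p.
Proof.
intros. pose proof (Rpower_pos th (1 - p)). pose proof (pw_ge0 z p).
destruct (Rle_dec z th); [nra|]. pose proof (le_pw_of_ge th z p). lra.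
Qed.

Lemma pw_le_sq z th q : 0 <= z <= th -> th <= 1 -> 2 <= q -> pw z q <= th * th.
Proof.
intros Hz Hth Hq. apply Rle_trans with (pw th q); [apply pw_le_base; lra|].
destruct (Req_dec th 0) as [E|E]; [rewrite E, pw_nonpos; lra|].
apply Rle_trans with (pw th 2); [apply pw_le_exp; lra|].
rewrite pw_Rpower by lra. replace 2 with (1 + 1) by ring. rewrite Rpower_plus, Rpower_1; lra.
Qed.

Lemma continuity_pt_ball f x0 : continuity_pt f x0 ->
  forall e, 0 < e -> exists d, 0 < d /\ forall x, Rabs (x - x0) < d -> Rabs (f x - f x0) < e.
Proof.
intros Hf e He. destruct (Hf e He) as [d [Hd H]]. exists d; split; auto.
intros x Hx. destruct (Req_dec x x0) as [->|Hne].
- rewrite Rminus_diag, Rabs_R0; lra.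
- apply (H x). repeat split; auto.
Qed.

Lemma Rpower_near_exp0 b e : 0 < b -> 0 < e ->
  exists d, 0 < d /\ forall s, Rabs s < d -> Rabs (Rpower b s - 1) < e.
Proof.
intros Hb He.
assert (Hc : continuity_pt (fun s => Rpower b s) 0).
{ apply continuity_pt_filterlim, (ex_derive_continuous (V:=R_NormedModule)).
  unfold Rpower. auto_derive. auto. }
destruct (continuity_pt_ball _ _ Hc e He) as [d [Hd H]]. exists d; split; auto.
intros s Hs. rewrite <- (Rpower_O b) by lra. apply H. rewrite Rminus_0_r; auto.
Qed.

Lemma Rpower_near_base1 P e : 0 < e ->
  exists d, 0 < d /\ forall x, Rabs (x - 1) < d -> Rabs (Rpower x P - 1) < e.
Proof.
intro He.
assert (Hc : continuity_pt (fun x => Rpower x P) 1).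
{ apply derivable_continuous_pt. eexists. apply derivable_pt_lim_power; lra. }
destruct (continuity_pt_ball _ _ Hc e He) as [d [Hd H]]. exists d; split; auto.
intros x Hx. replace (Rpower x P - 1) with (Rpower x P - Rpower 1 P)
  by (unfold Rpower at 2; rewrite ln_1, Rmult_0_r, exp_0; auto).
apply H; auto.
Qed.

Lemma continuous_pw a x : 0 <= a -> continuous (fun y => pw y a) x.
Proof.
intro Ha. destruct (Req_dec a 0) as [->|Ha0].
{ apply continuous_ext with (fun _ => 1); [intro; rewrite pw_exp0; auto|apply continuous_const]. }
destruct (Rtotal_order x 0) as [Hx|[->|Hx]].
- apply continuous_ext_loc with (fun _ => 0); [|apply continuous_const].
  exists (mkposreal (-x) ltac:(lra)). intros y Hy.
  assert (Rabs (y - x) < -x) by apply Hy.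
  rewrite pw_nonpos; auto. unfold Rabs in *; destruct Rcase_abs; lra.
- apply continuity_pt_filterlim. intros e He. exists (Rpower e (/ a)); split; [apply Rpower_pos|].
  intros y [_ Hy]. change (Rabs (y - 0) < Rpower e (/ a)) in Hy. change (Rabs (pw y a - pw 0 a) < e).
  rewrite Rminus_0_r in Hy. rewrite (pw_nonpos 0), Rminus_0_r by lra.
  destruct (Rle_dec y 0); [rewrite pw_nonpos, Rabs_R0; auto|].
  rewrite pw_Rpower, Rabs_pos_eq by (try left; try apply Rpower_pos; lra).
  replace e with (Rpower (Rpower e (/ a)) a) by (rewrite Rpower_mult, Rinv_l, Rpower_1; auto).
  apply Rlt_Rpower_l; [lra|]. rewrite Rabs_pos_eq in Hy; lra.
- apply continuous_ext_loc with (fun y => Rpower y a).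
  + exists (mkposreal x Hx). intros y Hy. assert (Rabs (y - x) < x) by apply Hy.
    rewrite pw_Rpower; auto. unfold Rabs in *; destruct Rcase_abs; lra.
  + apply continuity_pt_filterlim, derivable_continuous_pt. eexists.
    apply derivable_pt_lim_power; auto.
Qed.

Definition clamp (lo hi y : R) : R := Rmax lo (Rmin hi y).

Lemma clamp_continuous lo hi x : continuous (clamp lo hi) x.
Proof.
apply continuity_pt_filterlim. intros e He. exists e; split; auto.
intros y [_ Hy]. change (Rabs (clamp lo hi y - clamp lo hi x) < e). change (Rabs (y - x) < e) in Hy.
eapply Rle_lt_trans; [|exact Hy].
unfold clamp, Rmax, Rmin. repeat destruct Rle_dec; unfold Rabs; repeat destruct Rcase_abs; lra.
Qed.

Lemma clamp_id lo hi y : lo <= y <= hi -> clamp lo hi y = y.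
Proof. intros; unfold clamp, Rmax, Rmin; repeat destruct Rle_dec; lra. Qed.

Lemma clamp_range lo hi y : lo <= hi -> lo <= clamp lo hi y <= hi.
Proof. intros; unfold clamp, Rmax, Rmin; repeat destruct Rle_dec; lra. Qed.

Lemma abs_clamp_le M y : 0 <= M -> Rabs (clamp (- M) M y) <= Rabs y /\ Rabs (clamp (- M) M y) <= M.
Proof.
intros; unfold clamp, Rmax, Rmin; repeat destruct Rle_dec; unfold Rabs; repeat destruct Rcase_abs; lra.
Qed.

Lemma clamp_error M p y : 0 < M -> 1 <= p ->
  Rabs (y - clamp (- M) M y) <= Rpower M (1 - p) * pw (Rabs y) p.
Proof.
intros HM Hp. destruct (Rle_dec (Rabs y) M).
- rewrite clamp_id, Rminus_diag, Rabs_R0 by (unfold Rabs in *; destruct Rcase_abs; lra).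
  pose proof (Rpower_pos M (1 - p)); pose proof (pw_ge0 (Rabs y) p); nra.
- eapply Rle_trans; [|apply le_pw_of_ge; lra].
  unfold clamp, Rmax, Rmin in *; repeat destruct Rle_dec; unfold Rabs in *; repeat destruct Rcase_abs; lra.
Qed.

Lemma continuous_pw_abs a (f : R -> R) x : 0 <= a -> continuous f x ->
  continuous (fun y => pw (Rabs (f y)) a) x.
Proof.
intros Ha Hf. apply (continuous_comp (fun y => Rabs (f y)) (fun z => pw z a)); [|apply continuous_pw; auto].
apply (continuous_comp f Rabs); auto. apply continuous_Rabs.
Qed.

Lemma Rint_RInt f a b I : Rint f a b I -> ex_RInt f a b /\ RInt f a b = I.
Proof. intros [pr <-]. split; [apply (ex_RInt_Reals_1 _ _ _ pr)|apply RInt_Reals]. Qed.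

Lemma RInt_Rint f a b : ex_RInt f a b -> Rint f a b (RInt f a b).
Proof. intro H. exists (ex_RInt_Reals_0 _ _ _ H). symmetry; apply RInt_Reals. Qed.

Lemma ex_RInt_continuous_on (f : R -> R) a b : a <= b ->
  (forall t, a <= t <= b -> continuous f t) -> ex_RInt f a b.
Proof.
intros Hab H. apply (ex_RInt_continuous (V := R_CompleteNormedModule)).
rewrite Rmin_left, Rmax_right by lra. auto.
Qed.

Lemma RInt_scal_R (f : R -> R) a b K : ex_RInt f a b -> RInt (fun t => K * f t) a b = K * RInt f a b.
Proof. exact (RInt_scal (V := R_CompleteNormedModule) f a b K). Qed.

Lemma RInt_ext_R (f g : R -> R) a b : (forall t, Rmin a b < t < Rmax a b -> f t = g t) ->
  RInt f a b = RInt g a b.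
Proof. exact (RInt_ext (V := R_CompleteNormedModule) f g a b). Qed.

Lemma RInt_const_R a b c : RInt (fun _ => c) a b = c * (b - a).
Proof.
rewrite (RInt_const (V := R_CompleteNormedModule)). unfold scal; simpl; unfold mult; simpl; ring.
Qed.

Lemma RInt_affine (f : R -> R) a b c K : ex_RInt f a b ->
  RInt (fun t => c + K * f t) a b = c * (b - a) + K * RInt f a b.
Proof.
intro H. rewrite (RInt_plus (V := R_CompleteNormedModule) (fun _ => c) (fun t => K * f t)).
- rewrite RInt_const_R, RInt_scal_R; auto.
- apply ex_RInt_const.
- apply (ex_RInt_scal (V := R_CompleteNormedModule)); auto.
Qed.

Lemma RInt_le_of_subinterval (f : R -> R) a r b : a <= r <= b -> ex_RInt f a b ->
  (forall t, a < t < r -> 0 <= f t) -> RInt f r b <= RInt f a b.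
Proof.
intros Hr Hf Hpos.
assert (Har : ex_RInt f a r) by (apply (ex_RInt_Chasles_1 f a r b); auto).
assert (Hrb : ex_RInt f r b) by (apply (ex_RInt_Chasles_2 f a r b); auto).
rewrite <- (RInt_Chasles f a r b Har Hrb).
assert (0 <= RInt f a r) by (apply RInt_ge_0; auto; lra).
change (plus (RInt f a r) (RInt f r b)) with (RInt f a r + RInt f r b). lra.
Qed.

Lemma RInt_le_split (F G : R -> R) rho C e : 0 < rho <= 1 -> 0 <= e ->
  (forall t, 0 <= t <= 1 -> continuous F t) -> (forall t, 0 <= t <= 1 -> continuous G t) ->
  (forall t, 0 <= t <= rho -> F t <= C) -> (forall t, 0 <= t <= 1 -> 0 <= G t) ->
  (forall t, rho <= t <= 1 -> F t <= G t + e) ->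
  RInt F 0 1 <= RInt G 0 1 + rho * C + e.
Proof.
intros Hrho He HF HG HFC HG0 HFG.
assert (exF : forall a b, 0 <= a <= b -> b <= 1 -> ex_RInt F a b)
  by (intros; apply ex_RInt_continuous_on; [lra|intros; apply HF; lra]).
assert (exG : forall a b, 0 <= a <= b -> b <= 1 -> ex_RInt G a b)
  by (intros; apply ex_RInt_continuous_on; [lra|intros; apply HG; lra]).
assert (Hlow : RInt F 0 rho <= rho * C).
{ apply Rle_trans with (RInt (fun _ => C) 0 rho); [|rewrite RInt_const_R; lra].
  apply RInt_le; [lra|apply exF; lra|apply ex_RInt_const|intros; apply HFC; lra]. }
assert (Hhigh : RInt F rho 1 <= RInt (fun t => G t + e) rho 1).
{ apply RInt_le; [lra|apply exF; lra| |intros; apply HFG; lra].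
  apply (ex_RInt_plus (V := R_CompleteNormedModule)); [apply exG; lra|apply ex_RInt_const]. }
rewrite (RInt_plus (V := R_CompleteNormedModule) G (fun _ => e)), RInt_const_R in Hhigh
  by (try apply exG; try apply ex_RInt_const; lra).
assert (HG1 : RInt G rho 1 <= RInt G 0 1)
  by (apply RInt_le_of_subinterval; [lra|apply exG; lra|intros; apply HG0; lra]).
rewrite <- (RInt_Chasles F 0 rho 1) by (apply exF; lra).
change (plus (RInt F 0 rho) (RInt F rho 1)) with (RInt F 0 rho + RInt F rho 1).
change (plus (RInt G rho 1) (e * (1 - rho))) with (RInt G rho 1 + e * (1 - rho)) in Hhigh.
nra.
Qed.

Lemma RInt_pos_of_continuous (f : R -> R) t0 : (forall t, 0 <= t <= 1 -> continuous f t) ->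
  (forall t, 0 <= t <= 1 -> 0 <= f t) -> 0 < t0 < 1 -> 0 < f t0 -> 0 < RInt f 0 1.
Proof.
intros Hc Hn Ht0 Hf0.
destruct (continuity_pt_ball f t0 (proj2 (continuity_pt_filterlim f t0) (Hc t0 ltac:(lra))) (f t0 / 2))
  as [d [Hd Hball]]; [lra|].
set (a := Rmax (t0 - d / 2) (t0 / 2)). set (b := Rmin (t0 + d / 2) ((1 + t0) / 2)).
assert (Ha : t0 / 2 <= a /\ t0 - d / 2 <= a /\ a < t0) by (unfold a, Rmax; destruct Rle_dec; lra).
assert (Hb : b <= (1 + t0) / 2 /\ b <= t0 + d / 2 /\ t0 < b) by (unfold b, Rmin; destruct Rle_dec; lra).
assert (Hex : forall x y, 0 <= x <= y -> y <= 1 -> ex_RInt f x y)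
  by (intros; apply ex_RInt_continuous_on; [lra|intros; apply Hc; lra]).
assert (Hab : 0 < RInt f a b).
{ apply RInt_gt_0; [lra| |intros; apply Hc; lra].
  intros x Hx. assert (Rabs (f x - f t0) < f t0 / 2) by (apply Hball, Rabs_def1; lra).
  apply Rabs_def2 in H. lra. }
assert (0 <= RInt f 0 a) by (apply RInt_ge_0; [lra|apply Hex; lra|intros; apply Hn; lra]).
assert (0 <= RInt f b 1) by (apply RInt_ge_0; [lra|apply Hex; lra|intros; apply Hn; lra]).
rewrite <- (RInt_Chasles f 0 a 1), <- (RInt_Chasles f a b 1) by (apply Hex; lra).
change (0 < RInt f 0 a + (RInt f a b + RInt f b 1)). lra.
Qed.

Lemma abs_le_RInt_of_derive u du h r :
  (forall t, 0 <= t <= 1 -> derivable_pt_lim u t (du t)) ->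
  (forall t, 0 <= t <= 1 -> continuous du t) -> u 1 = 0 ->
  (forall t, 0 <= t <= 1 -> continuous h t) ->
  (forall t, 0 < t < 1 -> Rabs (du t) <= h t) -> 0 <= r <= 1 ->
  Rabs (u r) <= RInt h 0 1.
Proof.
intros Hd Hdc Hu1 Hh Hle Hr.
assert (Hftc : is_RInt du r 1 (minus (u 1) (u r))).
{ apply (is_RInt_derive (V := R_CompleteNormedModule)); rewrite Rmin_left, Rmax_right by lra;
    intros t Ht; [apply is_derive_Reals, Hd|apply Hdc]; lra. }
apply (is_RInt_unique (V := R_CompleteNormedModule)) in Hftc.
replace (u r) with (- RInt du r 1) by (rewrite Hftc, Hu1; unfold minus, plus, opp; simpl; ring).
assert (exdu : ex_RInt du r 1) by (apply ex_RInt_continuous_on; [lra|intros; apply Hdc; lra]).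
assert (exh : ex_RInt h 0 1) by (apply ex_RInt_continuous_on; [lra|intros; apply Hh; lra]).
rewrite Rabs_Ropp. eapply Rle_trans; [apply abs_RInt_le; [lra|auto]|].
eapply Rle_trans; [apply RInt_le; [lra| | |intros; apply Hle; lra]|].
- apply (ex_RInt_norm du); auto.
- apply (ex_RInt_Chasles_2 h 0 r 1); auto; lra.
- apply RInt_le_of_subinterval; auto.
  intros t Ht. eapply Rle_trans; [apply Rabs_pos|apply Hle; lra].
Qed.

(** * Energy and weighted mass of test functions *)

Definition energy (p : R) (dv : R -> R) : R := RInt (fun r => pw (Rabs (dv r)) p) 0 1.

Definition mass (p : R) (v : R -> R) : R := RInt (fun r => pw r (p - 2) * pw (Rabs (v r)) p) 0 1.

Lemma continuous_mass_density p (v : R -> R) t : 2 <= p -> continuous v t ->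
  continuous (fun r => pw r (p - 2) * pw (Rabs (v r)) p) t.
Proof.
intros Hp Hv. apply (continuous_mult (fun r => pw r (p - 2)) (fun r => pw (Rabs (v r)) p)).
- apply continuous_pw; lra.
- apply continuous_pw_abs; auto; lra.
Qed.

Lemma mass_density_ge0 p (v : R -> R) r : 0 <= pw r (p - 2) * pw (Rabs (v r)) p.
Proof. apply Rmult_le_pos; apply pw_ge0. Qed.

Lemma ex_RInt_energy p (dv : R -> R) : 0 <= p -> (forall t, 0 <= t <= 1 -> continuous dv t) ->
  ex_RInt (fun r => pw (Rabs (dv r)) p) 0 1.
Proof. intros. apply ex_RInt_continuous_on; [lra|intros; apply continuous_pw_abs; auto]. Qed.

Lemma ex_RInt_mass p (v : R -> R) : 2 <= p -> (forall t, 0 <= t <= 1 -> continuous v t) ->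
  ex_RInt (fun r => pw r (p - 2) * pw (Rabs (v r)) p) 0 1.
Proof. intros. apply ex_RInt_continuous_on; [lra|intros; apply continuous_mass_density; auto]. Qed.

Lemma energy_ge0 p dv : (forall t, 0 <= t <= 1 -> continuous dv t) -> 0 <= p -> 0 <= energy p dv.
Proof. intros. apply RInt_ge_0; [lra|apply ex_RInt_energy; auto|intros; apply pw_ge0]. Qed.

Lemma pw_abs_scale c y p : 0 < c -> pw (Rabs (c * y)) p = pw c p * pw (Rabs y) p.
Proof. intro. rewrite Rabs_mult, Rabs_pos_eq by lra. apply pw_mul; [lra|apply Rabs_pos]. Qed.

Section Admissible.

Variables v dv : R -> R.
Hypothesis Hv : admissible v dv.

Lemma admissible_continuous r : 0 <= r <= 1 -> continuous v r.
Proof.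
intro. apply continuity_pt_filterlim, derivable_continuous_pt. exists (dv r). apply Hv; auto.
Qed.

Lemma admissible_continuous_deriv r : 0 <= r <= 1 -> continuous dv r.
Proof. intro. apply continuity_pt_filterlim. apply Hv; auto. Qed.

(* Integrate the pointwise bound [|v'| <= th + th^(1-p) |v'|^p] from [r] to [1]. *)
Lemma admissible_abs_le p th r : 1 <= p -> 0 < th -> 0 <= r <= 1 ->
  Rabs (v r) <= th + Rpower th (1 - p) * energy p dv.
Proof.
intros Hp Hth Hr. pose proof Hv as [Hd [_ [_ [Hv1 _]]]].
assert (Hex := ex_RInt_energy p dv ltac:(lra) admissible_continuous_deriv).
assert (E : RInt (fun t => th + Rpower th (1 - p) * pw (Rabs (dv t)) p) 0 1
  = th + Rpower th (1 - p) * energy p dv).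
{ rewrite RInt_affine by exact Hex. unfold energy. rewrite Rminus_0_r, Rmult_1_r. reflexivity. }
rewrite <- E.
apply (abs_le_RInt_of_derive v dv); auto.
- apply admissible_continuous_deriv.
- intros t Ht. apply (continuous_plus (V := R_NormedModule) (fun _ => th)); [apply continuous_const|].
  apply (continuous_mult (fun _ => Rpower th (1 - p))); [apply continuous_const|].
  apply continuous_pw_abs; [lra|apply admissible_continuous_deriv; auto].
- intros t Ht. apply young_threshold; auto. apply Rabs_pos.
Qed.

Lemma admissible_abs_le_energy p r : 1 <= p -> 0 <= r <= 1 -> Rabs (v r) <= 1 + energy p dv.
Proof.
intros. pose proof (admissible_abs_le p 1 r).
unfold Rpower in H1. rewrite ln_1, Rmult_0_r, exp_0 in H1. lra.
Qed.

Lemma energy_pos p : 1 <= p -> 0 < energy p dv.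
Proof.
intro Hp. destruct (energy_ge0 p dv admissible_continuous_deriv ltac:(lra)) as [H|H]; auto.
exfalso. pose proof Hv as [_ [_ [_ [_ Hnz]]]]. apply Hnz. intros r Hr.
destruct (Req_dec (v r) 0) as [E|E]; auto. exfalso.
pose proof (admissible_abs_le p (Rabs (v r) / 2) r Hp). rewrite <- H, Rmult_0_r in H0.
pose proof (Rabs_pos_lt _ E). specialize (H0 ltac:(lra) Hr). lra.
Qed.

Lemma admissible_nonzero_interior : exists t0, 0 < t0 < 1 /\ v t0 <> 0.
Proof.
pose proof Hv as [_ [_ [_ [Hv1 Hnz]]]].
apply NNPP. intro Hno. apply Hnz. intros r Hr.
destruct (Req_dec (v r) 0) as [E|E]; auto. exfalso.
destruct (Req_dec r 1) as [->|Hr1]; auto.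
destruct (Req_dec r 0) as [->|Hr0]; [|apply Hno; exists r; split; auto; lra].
destruct (continuity_pt_ball v 0 (proj2 (continuity_pt_filterlim v 0) (admissible_continuous 0 ltac:(lra)))
  (Rabs (v 0) / 2)) as [d [Hd Hball]]; [pose proof (Rabs_pos_lt _ E); lra|].
set (t := Rmin (d / 2) (1 / 2)).
assert (0 < t <= d / 2 /\ t <= 1 / 2) by (unfold t, Rmin; destruct Rle_dec; lra).
assert (Hvt : v t = 0) by (apply NNPP; intro; apply Hno; exists t; split; [lra|auto]).
assert (Rabs (v t - v 0) < Rabs (v 0) / 2) by (apply Hball; rewrite Rminus_0_r, Rabs_pos_eq; lra).
rewrite Hvt, Rminus_0_l, Rabs_Ropp in H0. pose proof (Rabs_pos (v 0)). lra.
Qed.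

Lemma mass_pos p : 2 <= p -> 0 < mass p v.
Proof.
intro Hp. destruct admissible_nonzero_interior as [t0 [Ht0 Hv0]].
apply (RInt_pos_of_continuous _ t0); auto.
- intros; apply continuous_mass_density; auto; apply admissible_continuous; auto.
- intros; apply mass_density_ge0.
- apply Rmult_lt_0_compat; apply pw_gt0; [lra|apply Rabs_pos_lt; auto].
Qed.

Lemma admissible_scale c : c <> 0 -> admissible (fun r => c * v r) (fun r => c * dv r).
Proof.
intro Hc. pose proof Hv as [Hd [Hdc [H0 [H1 Hnz]]]]. repeat split.
- intros r Hr. apply derivable_pt_lim_scal, Hd; auto.
- intros r Hr. apply continuity_pt_scal, Hdc; auto.
- rewrite H0; ring.
- rewrite H1; ring.
- intro Hz. apply Hnz. intros r Hr. specialize (Hz r Hr). simpl in Hz.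
  destruct (Rmult_integral _ _ Hz); [contradiction|auto].
Qed.

Lemma energy_scale c p : 0 < c -> 0 <= p -> energy p (fun r => c * dv r) = pw c p * energy p dv.
Proof.
intros Hc Hp. unfold energy.
rewrite <- RInt_scal_R by (apply ex_RInt_energy; [lra|apply admissible_continuous_deriv]).
apply RInt_ext_R. intros; apply pw_abs_scale; auto.
Qed.

Lemma mass_scale c p : 0 < c -> 2 <= p -> mass p (fun r => c * v r) = pw c p * mass p v.
Proof.
intros Hc Hp. unfold mass.
rewrite <- RInt_scal_R by (apply ex_RInt_mass; [lra|apply admissible_continuous]).
apply RInt_ext_R. intros. rewrite pw_abs_scale by auto. ring.
Qed.

End Admissible.

Lemma Rayleigh_of_admissible p v dv : 2 <= p -> admissible v dv ->
  Rayleigh p (energy p dv / ((p - 1) * mass p v)).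
Proof.
intros Hp Hv. exists v, dv, (energy p dv), (mass p v). split; [auto|split; [|split; [|reflexivity]]];
  apply RInt_Rint.
- apply ex_RInt_energy; [lra|apply admissible_continuous_deriv with v; auto].
- apply ex_RInt_mass; [lra|apply admissible_continuous with dv; auto].
Qed.

Lemma Rayleigh_normalized p x : 2 <= p -> Rayleigh p x ->
  0 < x /\ exists v dv, admissible v dv /\ energy p dv = 1 /\ mass p v = / ((p - 1) * x).
Proof.
intros Hp [v [dv [A [B [Hv [HA [HB ->]]]]]]].
apply Rint_RInt in HA as [_ HA]. apply Rint_RInt in HB as [_ HB].
change (energy p dv = A) in HA. change (mass p v = B) in HB.
pose proof (energy_pos v dv Hv p ltac:(lra)) as HA0. pose proof (mass_pos v dv Hv p Hp) as HB0.
rewrite HA in HA0. rewrite HB in HB0.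
split; [apply Rdiv_lt_0_compat; nra|].
set (c := Rpower A (- / p)).
assert (Hc : 0 < c) by apply Rpower_pos.
assert (Hcp : pw c p = / A).
{ unfold c. rewrite pw_Rpower, Rpower_mult by apply Rpower_pos.
  replace (- / p * p) with (- (1)) by (field; lra). rewrite Rpower_Ropp, Rpower_1; auto. }
exists (fun r => c * v r), (fun r => c * dv r). split; [apply admissible_scale; [auto|lra]|split].
- rewrite (energy_scale v dv Hv), Hcp, HA by lra. field; lra.
- rewrite (mass_scale v dv Hv), Hcp, HB by lra. field; lra.
Qed.

(** * Truncation of the derivative *)

Lemma mass_density_le P p r x : 2 <= p <= P -> 0 <= r <= 1 -> 0 <= x <= 2 ->
  pw r (p - 2) * pw x p <= Rpower 2 P.
Proof.
intros Hp Hr Hx.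
assert (pw r (p - 2) <= 1) by (apply pw_le1; lra).
assert (pw x p <= Rpower 2 P).
{ apply Rle_trans with (pw 2 p); [apply pw_le_base; lra|].
  rewrite pw_Rpower by lra. apply Rle_Rpower; lra. }
pose proof (pw_ge0 r (p - 2)). pose proof (pw_ge0 x p). nra.
Qed.

Lemma pw_clamp_le th M p q y : 0 < th <= 1 -> 1 <= M -> 2 <= p -> 2 <= q ->
  pw (Rabs (clamp (- M) M y)) q <= th * th + Rpower (M / th) (Rabs (q - p)) * pw (Rabs y) p.
Proof.
intros Hth HM Hp Hq. destruct (abs_clamp_le M y) as [Hzy HzM]; [lra|].
pose proof (Rabs_pos (clamp (- M) M y)). set (z := Rabs (clamp (- M) M y)) in *.
pose proof (Rpower_pos (M / th) (Rabs (q - p))). pose proof (pw_ge0 (Rabs y) p).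
destruct (Rle_dec z th); [assert (pw z q <= th * th) by (apply pw_le_sq; lra); nra|].
assert (Hsplit : pw z q = Rpower z p * Rpower z (q - p))
  by (rewrite pw_Rpower, <- Rpower_plus by lra; f_equal; ring).
assert (Rpower z p <= pw (Rabs y) p) by (rewrite <- pw_Rpower by lra; apply pw_le_base; lra).
assert (Rpower z (q - p) <= Rpower (M / th) (Rabs (q - p))).
{ assert (M <= M / th) by (apply Rmult_le_reg_r with th; [lra|]; field_simplify; nra).
  assert (/ (M / th) <= th) by (rewrite Rinv_div; apply Rmult_le_reg_r with M; [lra|]; field_simplify; nra).
  apply Rpower_le_abs_exp; lra. }
pose proof (Rpower_pos z p). pose proof (Rpower_pos z (q - p)).
rewrite Hsplit. nra.
Qed.

(* For [x >= th] the perturbation loses at most the factor [1 - eta / th], and the change of exponent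
   costs the factor [(r x)^(q - p)], bounded below because [r x] stays in [[rho th, 2]]. *)
Lemma mass_density_ratio th eta rho P p q r x y : 0 < eta < th -> th <= 1 -> 0 < rho <= 1 ->
  2 <= p <= P -> 2 <= q <= P -> rho <= r <= 1 -> th <= x <= 2 -> Rabs (x - y) <= eta ->
  Rpower (1 - eta / th) P * Rpower (rho * th / 2) (Rabs (q - p)) * (pw r (p - 2) * pw x p)
  <= pw r (q - 2) * pw y q.
Proof.
intros Heta Hth Hrho Hp Hq Hr Hx Hxy.
set (lam := 1 - eta / th).
assert (Hlam : 0 < lam <= 1).
{ assert (0 < eta / th < 1) by (split; [apply Rdiv_lt_0_compat|apply Rlt_div_l]; lra). unfold lam; lra. }
assert (Hlx : lam * x <= y).
{ assert (eta <= eta / th * x) by (unfold Rdiv; rewrite Rmult_assoc; apply Rmult_le_reg_r with th; [lra|];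
    field_simplify; nra).
  unfold lam. unfold Rabs in Hxy; destruct Rcase_abs; nra. }
assert (Hsig : Rpower (rho * th / 2) (Rabs (q - p)) <= Rpower (r * x) (q - p)).
{ apply Rpower_ge_abs_exp; [split; nra|split; [nra|]].
  rewrite Rinv_div. apply Rle_trans with 2; [nra|].
  apply Rmult_le_reg_r with (rho * th); [nra|]. field_simplify; nra. }
assert (HlP : Rpower lam P <= Rpower lam q) by (apply Rpower_le_exp; lra).
rewrite !pw_Rpower by nra.
assert (Hy : Rpower (lam * x) q <= Rpower y q) by (apply Rle_Rpower_l; nra).
rewrite <- Rpower_mult_distr in Hy by lra.
assert (E : Rpower r (q - 2) * Rpower x q = Rpower r (p - 2) * Rpower x p * Rpower (r * x) (q - p)).
{ rewrite <- Rpower_mult_distr by lra. replace (q - 2) with ((p - 2) + (q - p)) by ring.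
  replace q with (p + (q - p)) at 2 by ring. rewrite !Rpower_plus. ring. }
pose proof (Rpower_pos lam P). pose proof (Rpower_pos (rho * th / 2) (Rabs (q - p))).
pose proof (Rpower_pos r (p - 2)). pose proof (Rpower_pos x p). pose proof (Rpower_pos r (q - 2)).
pose proof (Rpower_pos (r * x) (q - p)).
apply Rle_trans with (Rpower lam q * (Rpower r (q - 2) * Rpower x q)).
- rewrite E. apply Rle_trans with (Rpower lam q * Rpower (r * x) (q - p) * (Rpower r (p - 2) * Rpower x p));
    [|right; ring].
  apply Rmult_le_compat_r; [nra|]. apply Rmult_le_compat; lra.
- replace (Rpower lam q * (Rpower r (q - 2) * Rpower x q))
    with (Rpower r (q - 2) * (Rpower lam q * Rpower x q)) by ring.
  apply Rmult_le_compat_l; lra.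
Qed.

Lemma perturb_factor_le1 th eta rho P s : 0 < eta < th -> th <= 1 -> 0 < rho <= 1 -> 0 <= P -> 0 <= s ->
  0 <= Rpower (1 - eta / th) P * Rpower (rho * th / 2) s <= 1.
Proof.
intros. assert (0 < eta / th < 1) by (split; [apply Rdiv_lt_0_compat|apply Rlt_div_l]; lra).
assert (0 < Rpower (1 - eta / th) P <= 1) by (split; [apply Rpower_pos|apply Rpower_le1; lra]).
assert (0 < Rpower (rho * th / 2) s <= 1) by (split; [apply Rpower_pos|apply Rpower_le1; nra]).
split; nra.
Qed.

Lemma mass_density_perturb th eta rho P p q r x y : 0 < eta < th -> th <= 1 -> 0 < rho <= 1 ->
  2 <= p <= P -> 2 <= q <= P -> rho <= r <= 1 -> 0 <= x <= 2 -> Rabs (x - y) <= eta ->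
  pw r (p - 2) * pw x p
  <= pw r (q - 2) * pw y q
     + (th * th + Rpower 2 P * (1 - Rpower (1 - eta / th) P * Rpower (rho * th / 2) (Rabs (q - p)))).
Proof.
intros Heta Hth Hrho Hp Hq Hr Hx Hxy.
set (c := Rpower (1 - eta / th) P * Rpower (rho * th / 2) (Rabs (q - p))).
assert (Hc : 0 <= c <= 1) by (apply perturb_factor_le1; try apply Rabs_pos; lra).
pose proof (pw_ge0 r (q - 2)). pose proof (pw_ge0 y q).
pose proof (pw_ge0 r (p - 2)). pose proof (pw_ge0 x p).
assert (H2P : 1 <= Rpower 2 P) by (apply Rpower_ge1; lra).
destruct (Rle_dec x th).
- assert (pw r (p - 2) <= 1) by (apply pw_le1; lra).
  assert (pw x p <= th * th) by (apply pw_le_sq; lra). nra.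
- assert (c * (pw r (p - 2) * pw x p) <= pw r (q - 2) * pw y q)
    by (apply (mass_density_ratio th eta rho P); lra).
  assert (pw r (p - 2) * pw x p <= Rpower 2 P) by (apply mass_density_le; lra).
  nra.
Qed.

(* The inner clamp makes [trunc_deriv] continuous on all of R, so that [trunc] is differentiable
   everywhere, endpoints included. *)
Definition trunc_deriv (M : R) (dv : R -> R) (t : R) : R := clamp (- M) M (dv (clamp 0 1 t)).

Definition trunc (M : R) (dv : R -> R) (r : R) : R := RInt (trunc_deriv M dv) 1 r.

Section Truncation.

Variables v dv : R -> R.
Hypothesis Hv : admissible v dv.
Variable M : R.
Hypothesis HM : 1 <= M.

Lemma continuous_trunc_deriv t : continuous (trunc_deriv M dv) t.
Proof.
apply (continuous_comp (fun t => dv (clamp 0 1 t)) (clamp (- M) M)); [|apply clamp_continuous].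
apply (continuous_comp (clamp 0 1) dv); [apply clamp_continuous|].
apply (admissible_continuous_deriv v); auto. apply clamp_range; lra.
Qed.

Lemma trunc_derive r : is_derive (trunc M dv) r (trunc_deriv M dv r).
Proof.
apply (is_derive_RInt (V := R_CompleteNormedModule) _ _ 1); [|apply continuous_trunc_deriv].
exists (mkposreal 1 Rlt_0_1). intros b _. apply (RInt_correct (V := R_CompleteNormedModule)).
apply (ex_RInt_continuous (V := R_CompleteNormedModule)). intros; apply continuous_trunc_deriv.
Qed.

Lemma continuous_trunc r : continuous (trunc M dv) r.
Proof.
apply continuity_pt_filterlim, derivable_continuous_pt. exists (trunc_deriv M dv r).
apply is_derive_Reals, trunc_derive.
Qed.

Lemma trunc_admissible : ~ (forall r, 0 <= r <= 1 -> trunc M dv r = 0) ->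
  admissible (trunc M dv) (trunc_deriv M dv).
Proof.
intro Hnz. pose proof Hv as [_ [_ [H0 _]]]. repeat split; auto.
- intros; apply is_derive_Reals, trunc_derive.
- intros; apply continuity_pt_filterlim, continuous_trunc_deriv.
- unfold trunc_deriv. rewrite (clamp_id 0 1 0), H0 by lra. apply clamp_id; lra.
- apply (RInt_point (V := R_CompleteNormedModule)).
Qed.

Lemma trunc_close p r : 1 <= p -> 0 <= r <= 1 ->
  Rabs (v r - trunc M dv r) <= Rpower M (1 - p) * energy p dv.
Proof.
intros Hp Hr. pose proof Hv as [Hd [_ [_ [Hv1 _]]]].
assert (Hex := ex_RInt_energy p dv ltac:(lra) (admissible_continuous_deriv v dv Hv)).
unfold energy. rewrite <- RInt_scal_R by exact Hex.
apply (abs_le_RInt_of_derive (fun r => v r - trunc M dv r) (fun t => dv t - trunc_deriv M dv t)); auto.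
- intros t Ht. apply derivable_pt_lim_minus; [apply Hd; auto|apply is_derive_Reals, trunc_derive].
- intros t Ht. apply (continuous_minus (V := R_NormedModule));
    [apply (admissible_continuous_deriv v); auto|apply continuous_trunc_deriv].
- unfold trunc. rewrite Hv1, (RInt_point (V := R_CompleteNormedModule)). apply Rminus_0_r.
- intros t Ht. apply (continuous_mult (fun _ => Rpower M (1 - p))); [apply continuous_const|].
  apply continuous_pw_abs; [lra|apply (admissible_continuous_deriv v); auto].
- intros t Ht. unfold trunc_deriv. rewrite (clamp_id 0 1 t) by lra. apply clamp_error; lra.
Qed.

Lemma energy_trunc_le th p q : 0 < th <= 1 -> 2 <= p -> 2 <= q ->
  energy q (trunc_deriv M dv) <= th * th + Rpower (M / th) (Rabs (q - p)) * energy p dv.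
Proof.
intros Hth Hp Hq. set (K := Rpower (M / th) (Rabs (q - p))).
apply Rle_trans with (RInt (fun t => th * th + K * pw (Rabs (dv t)) p) 0 1).
2: { rewrite RInt_affine by (apply ex_RInt_energy; [lra|apply (admissible_continuous_deriv v); auto]).
     unfold energy; lra. }
apply RInt_le; [lra| | |].
- apply ex_RInt_energy; [lra|intros; apply continuous_trunc_deriv].
- apply (ex_RInt_continuous (V := R_CompleteNormedModule)). intros t Ht.
  rewrite Rmin_left, Rmax_right in Ht by lra.
  apply (continuous_plus (V := R_NormedModule) (fun _ => th * th)); [apply continuous_const|].
  apply (continuous_mult (fun _ => K)); [apply continuous_const|].
  apply continuous_pw_abs; [lra|apply (admissible_continuous_deriv v); auto].
- intros t Ht. unfold trunc_deriv. rewrite (clamp_id 0 1 t) by lra. apply pw_clamp_le; lra.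
Qed.

Lemma mass_trunc_ge th rho P p q : 0 < th <= 1 -> 0 < rho <= 1 -> 2 <= p <= P -> 2 <= q <= P ->
  energy p dv <= 1 -> Rpower M (1 - p) < th ->
  mass p v <= mass q (trunc M dv) + rho * Rpower 2 P + (th * th
    + Rpower 2 P * (1 - Rpower (1 - Rpower M (1 - p) / th) P * Rpower (rho * th / 2) (Rabs (q - p)))).
Proof.
intros Hth Hrho Hp Hq HE Hdist. set (eta := Rpower M (1 - p)) in *.
assert (Heta : 0 < eta) by apply Rpower_pos.
assert (Hv2 : forall t, 0 <= t <= 1 -> Rabs (v t) <= 2)
  by (intros; pose proof (admissible_abs_le_energy v dv Hv p t); lra).
apply RInt_le_split; auto.
- pose proof (perturb_factor_le1 th eta rho P (Rabs (q - p))).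
  assert (1 <= Rpower 2 P) by (apply Rpower_ge1; lra).
  assert (0 <= Rabs (q - p)) by apply Rabs_pos. nra.
- intros; apply continuous_mass_density; [lra|apply (admissible_continuous v dv); auto].
- intros; apply continuous_mass_density; [lra|apply continuous_trunc].
- intros t Ht. apply mass_density_le; [lra|lra|split; [apply Rabs_pos|apply Hv2; lra]].
- intros; apply mass_density_ge0.
- intros t Ht. apply mass_density_perturb; try lra.
  + split; [apply Rabs_pos|apply Hv2; lra].
  + eapply Rle_trans; [apply Rabs_triang_inv2|].
    pose proof (trunc_close p t ltac:(lra) ltac:(lra)). pose proof (Rpower_pos M (1 - p)).
    fold eta in H. nra.
Qed.

End Truncation.

Lemma Rayleigh_nonempty p : 2 <= p -> exists x, Rayleigh p x.
Proof.
intro Hp. eexists. apply (Rayleigh_of_admissible p (fun r => 1 - r * r) (fun r => -2 * r)); auto.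
repeat split.
- intros r _. apply is_derive_Reals. auto_derive; auto. ring.
- intros r _. apply continuity_pt_filterlim. apply (continuous_mult (fun _ => -2) (fun r => r));
    [apply continuous_const|apply continuous_id].
- ring.
- ring.
- intro H. specialize (H 0 ltac:(lra)). lra.
Qed.

Lemma Rayleigh_ge p x : 2 <= p -> Rayleigh p x -> / ((p - 1) * Rpower 2 p) <= x.
Proof.
intros Hp Hx. destruct (Rayleigh_normalized p x Hp Hx) as [Hx0 [v [dv [Hv [HE HB]]]]].
assert (Hmass : mass p v <= Rpower 2 p).
{ apply Rle_trans with (RInt (fun _ => Rpower 2 p) 0 1); [|rewrite RInt_const_R; lra].
  apply RInt_le; [lra|apply ex_RInt_mass; [lra|apply (admissible_continuous v dv Hv)]|apply ex_RInt_const|].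
  intros t Ht. apply mass_density_le; [lra|lra|split; [apply Rabs_pos|]].
  pose proof (admissible_abs_le_energy v dv Hv p t). lra. }
rewrite HB in Hmass. pose proof (Rpower_pos 2 p). assert (Hpx : 0 < (p - 1) * x) by nra.
assert (H1 : / ((p - 1) * x) * ((p - 1) * x) <= Rpower 2 p * ((p - 1) * x))
  by (apply Rmult_le_compat_r; lra).
rewrite Rinv_l in H1 by lra.
apply Rmult_le_reg_l with ((p - 1) * Rpower 2 p); [nra|]. rewrite Rinv_r by nra. nra.
Qed.

Lemma eta1_glb p : 2 <= p -> is_glb (Rayleigh p) (eta1 p).
Proof.
intro Hp. unfold eta1. apply epsilon_spec.
set (E := fun y => Rayleigh p (- y)).
assert (HE : bound E).
{ exists 0. intros y Hy. destruct (Rayleigh_normalized p (- y) Hp Hy). lra. }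
assert (HE2 : exists y, E y).
{ destruct (Rayleigh_nonempty p Hp) as [x Hx]. exists (- x). unfold E. rewrite Ropp_involutive; auto. }
destruct (completeness E HE HE2) as [m [Hub Hlub]]. exists (- m). split.
- intros x Hx. assert (- x <= m) by (apply Hub; unfold E; rewrite Ropp_involutive; auto). lra.
- intros b Hb. assert (m <= - b) by (apply Hlub; intros y Hy; specialize (Hb _ Hy); lra). lra.
Qed.

Lemma eta1_le p x : 2 <= p -> Rayleigh p x -> eta1 p <= x.
Proof. intros Hp Hx. apply (proj1 (eta1_glb p Hp)); auto. Qed.

Lemma eta1_approx p e : 2 <= p -> 0 < e -> exists x, Rayleigh p x /\ x < eta1 p + e.
Proof.
intros Hp He. apply NNPP. intro Hn.
assert (Hlb : is_lower_bound (Rayleigh p) (eta1 p + e)).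
{ intros x Hx. apply Rnot_lt_le. intro. apply Hn. exists x; auto. }
pose proof (proj2 (eta1_glb p Hp) _ Hlb). lra.
Qed.

Lemma eta1_pos p : 2 <= p -> 0 < eta1 p.
Proof.
intro Hp. apply Rlt_le_trans with (/ ((p - 1) * Rpower 2 p)).
- pose proof (Rpower_pos 2 p). apply Rinv_0_lt_compat. nra.
- apply (proj2 (eta1_glb p Hp)). intros x Hx. apply Rayleigh_ge; auto.
Qed.

Lemma exists_truncation_level P th a : 0 < th -> 0 < a ->
  exists M, 1 <= M /\ forall eta, 0 < eta <= / M -> eta < th /\ 1 - a <= Rpower (1 - eta / th) P.
Proof.
intros Hth Ha. destruct (Rpower_near_base1 P a Ha) as [d [Hd Hnear]].
set (e := Rmin 1 d). assert (He : 0 < e <= 1 /\ e <= d) by (unfold e, Rmin; destruct Rle_dec; lra).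
exists (Rmax 1 (2 / (th * e))). split; [apply Rmax_l|].
intros eta [Heta HetaM].
assert (Hinv : / Rmax 1 (2 / (th * e)) <= th * e / 2).
{ replace (th * e / 2) with (/ (2 / (th * e))) by (field; lra).
  apply Rinv_le_contravar; [apply Rdiv_lt_0_compat; nra|apply Rmax_r]. }
assert (Hratio : 0 < eta / th <= e / 2)
  by (split; [apply Rdiv_lt_0_compat|apply Rle_div_l]; nra).
split; [nra|].
specialize (Hnear (1 - eta / th)). apply Rabs_def2 in Hnear; [lra|]. apply Rabs_def1; lra.
Qed.

Lemma quotient_le_of_bounds g B N D : 0 < g <= 1 -> 0 < B -> N <= 1 + g / 4 -> (1 - g / 4) * B <= D ->
  N / D <= (1 + g) / B.
Proof.
intros Hg HB HN HD. assert (HD0 : 0 < D) by nra.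
apply Rle_div_l; [lra|]. unfold Rdiv. rewrite Rmult_assoc.
apply Rle_trans with ((1 + g) * (/ B * ((1 - g / 4) * B))).
- replace (/ B * ((1 - g / 4) * B)) with (1 - g / 4) by (field; lra). nra.
- apply Rmult_le_compat_l; [lra|]. apply Rmult_le_compat_l; [left; apply Rinv_0_lt_compat|]; lra.
Qed.

Lemma mass_eq0 q w : (forall r, 0 <= r <= 1 -> w r = 0) -> 2 <= q -> mass q w = 0.
Proof.
intros Hw Hq. unfold mass. rewrite (RInt_ext_R _ (fun _ => 0)), RInt_const_R; [ring|].
intros t Ht. rewrite Rmin_left, Rmax_right in Ht by lra.
rewrite Hw, Rabs_R0, (pw_nonpos 0 q) by lra. ring.
Qed.

(* The truncation level [M] is fixed first; then the cutoffs [th] (size of values) and [rho]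
   (size of the weight) are chosen so that every error term of [energy_trunc_le] and
   [mass_trunc_ge] is small, uniformly for exponents closer than [d]. *)
Lemma truncation_parameters P k b : 2 <= P -> 0 < k -> 0 < b ->
  exists th rho M d, 0 < th <= 1 /\ 0 < rho <= 1 /\ 1 <= M /\ 0 < d /\ th * th <= k / 2 /\
    (forall s, Rabs s < d -> Rpower (M / th) s <= 1 + k / 2) /\
    (forall eta s, 0 < eta <= / M -> Rabs s < d -> eta < th /\
       rho * Rpower 2 P
       + (th * th + Rpower 2 P * (1 - Rpower (1 - eta / th) P * Rpower (rho * th / 2) s)) <= b).
Proof.
intros HP Hk Hb. set (T := Rpower 2 P).
assert (HT : 1 <= T) by (apply Rpower_ge1; lra).
set (a := b / (4 * T)).
assert (Ha : 0 < a /\ a * T = b / 4) by (unfold a; split; [apply Rdiv_lt_0_compat|field]; lra).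
set (th := Rmin 1 (Rmin (k / 2) (b / 4))).
assert (Hth : 0 < th <= 1 /\ th * th <= k / 2 /\ th * th <= b / 4).
{ assert (0 < th <= 1 /\ th <= k / 2 /\ th <= b / 4)
    by (unfold th, Rmin; repeat destruct Rle_dec; lra).
  nra. }
set (rho := Rmin 1 a).
assert (Hrho : 0 < rho <= 1 /\ rho <= a) by (unfold rho, Rmin; destruct Rle_dec; lra).
destruct (exists_truncation_level P th a) as [M [HM HMeta]]; try lra.
destruct (Rpower_near_exp0 (M / th) (k / 2)) as [d1 [Hd1 Hexp1]]; [apply Rdiv_lt_0_compat; lra|lra|].
destruct (Rpower_near_exp0 (rho * th / 2) a) as [d2 [Hd2 Hexp2]]; try nra.
exists th, rho, M, (Rmin d1 d2).
refine (conj _ (conj _ (conj _ (conj _ (conj _ (conj _ _)))))); try lra; [apply Rmin_pos; lra| |].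
- intros s Hs. specialize (Hexp1 s ltac:(pose proof (Rmin_l d1 d2); lra)). apply Rabs_def2 in Hexp1. lra.
- intros eta s Heta Hs. destruct (HMeta eta Heta) as [Hlt Hlam]. split; auto.
  specialize (Hexp2 s ltac:(pose proof (Rmin_r d1 d2); lra)). apply Rabs_def2 in Hexp2.
  pose proof (Rpower_pos (1 - eta / th) P). pose proof (Rpower_pos (rho * th / 2) s).
  assert (1 - 2 * a <= Rpower (1 - eta / th) P * Rpower (rho * th / 2) s).
  { destruct (Rle_dec a 1); [|nra].
    assert ((1 - a) * (1 - a) <= Rpower (1 - eta / th) P * Rpower (rho * th / 2) s)
      by (apply Rmult_le_compat; lra).
    nra. }
  fold T. nra.
Qed.

Lemma Rayleigh_transfer P Qm g : 2 <= P -> 0 < Qm -> 0 < g <= 1 ->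
  exists d, 0 < d /\ forall p q x, 2 <= p <= P -> 2 <= q <= P -> Rabs (q - p) < d ->
    Rayleigh p x -> (p - 1) * x <= Qm ->
    exists y, Rayleigh q y /\ (q - 1) * y <= (1 + g) * ((p - 1) * x).
Proof.
intros HP HQ Hg. set (k := g / 4).
destruct (truncation_parameters P k (k / Qm))
  as [th [rho [M [d [Hth [Hrho [HM [Hd [Hth2 [HN1 Herr]]]]]]]]]];
  try apply Rdiv_lt_0_compat; unfold k; try lra.
exists d; split; auto. intros p q x Hp Hq Hpq Hx HxQ.
destruct (Rayleigh_normalized p x ltac:(lra) Hx) as [Hx0 [v [dv [Hv [HE HB]]]]].
assert (HB0 : 0 < mass p v) by (rewrite HB; apply Rinv_0_lt_compat; nra).
assert (HbB : k / Qm <= k * mass p v)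
  by (rewrite HB; unfold Rdiv; apply Rmult_le_compat_l; [unfold k; lra|apply Rinv_le_contravar; nra]).
assert (Hs : Rabs (Rabs (q - p)) < d) by (rewrite Rabs_Rabsolu; lra).
set (eta := Rpower M (1 - p)).
destruct (Herr eta (Rabs (q - p))) as [Heta Hsmall]; auto.
{ split; [apply Rpower_pos|]. apply Rle_trans with (Rpower M (- (1))); [apply Rle_Rpower; lra|].
  rewrite Rpower_Ropp, Rpower_1 by lra. lra. }
assert (HN : energy q (trunc_deriv M dv) <= 1 + k).
{ pose proof (energy_trunc_le v dv Hv M HM th p q ltac:(lra) ltac:(lra) ltac:(lra)) as HN.
  rewrite HE, Rmult_1_r in HN. specialize (HN1 _ Hs). lra. }
assert (HD : (1 - k) * mass p v <= mass q (trunc M dv)).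
{ pose proof (mass_trunc_ge v dv Hv M HM th rho P p q ltac:(lra) ltac:(lra) Hp Hq ltac:(lra) Heta) as HD.
  fold eta in HD. lra. }
assert (HD0 : 0 < mass q (trunc M dv)) by (unfold k in HD; nra).
exists (energy q (trunc_deriv M dv) / ((q - 1) * mass q (trunc M dv))). split.
- apply Rayleigh_of_admissible; [lra|]. apply (trunc_admissible v); auto.
  intro Hz. rewrite (mass_eq0 q _ Hz) in HD0; lra.
- replace ((q - 1) * (energy q (trunc_deriv M dv) / ((q - 1) * mass q (trunc M dv))))
    with (energy q (trunc_deriv M dv) / mass q (trunc M dv)) by (field; lra).
  replace ((p - 1) * x) with (/ mass p v) by (rewrite HB, Rinv_inv; auto).
  apply quotient_le_of_bounds; auto.
Qed.

Lemma eta1_transfer P Qm g : 2 <= P -> 0 < Qm -> 0 < g <= 1 ->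
  exists d, 0 < d /\ forall p q, 2 <= p <= P -> 2 <= q <= P -> Rabs (q - p) < d ->
    (p - 1) * eta1 p < Qm -> (q - 1) * eta1 q <= (1 + g) * ((p - 1) * eta1 p).
Proof.
intros HP HQ Hg. destruct (Rayleigh_transfer P Qm g HP HQ Hg) as [d [Hd Htr]].
exists d; split; auto. intros p q Hp Hq Hpq HpQ.
apply Rle_plus_epsilon. intros eps Heps.
set (e := Rmin ((Qm - (p - 1) * eta1 p) / (p - 1)) (eps / ((1 + g) * (p - 1)))).
assert (He : 0 < e /\ (p - 1) * e <= Qm - (p - 1) * eta1 p /\ (1 + g) * ((p - 1) * e) <= eps).
{ assert (0 < (Qm - (p - 1) * eta1 p) / (p - 1)) by (apply Rdiv_lt_0_compat; lra).
  assert (0 < eps / ((1 + g) * (p - 1))) by (apply Rdiv_lt_0_compat; nra).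
  pose proof (Rmin_l ((Qm - (p - 1) * eta1 p) / (p - 1)) (eps / ((1 + g) * (p - 1)))).
  pose proof (Rmin_r ((Qm - (p - 1) * eta1 p) / (p - 1)) (eps / ((1 + g) * (p - 1)))).
  fold e in H1, H2. repeat split.
  - apply Rmin_pos; auto.
  - apply Rle_div_r in H1; lra.
  - apply Rle_div_r in H2; [lra|nra]. }
destruct (eta1_approx p e ltac:(lra) ltac:(lra)) as [x [Hx Hxe]].
destruct (Htr p q x Hp Hq Hpq Hx ltac:(nra)) as [y [Hy Hyx]].
assert ((q - 1) * eta1 q <= (q - 1) * y) by (apply Rmult_le_compat_l; [lra|apply eta1_le; auto; lra]).
assert ((p - 1) * x <= (p - 1) * eta1 p + (p - 1) * e) by nra.
assert ((1 + g) * ((p - 1) * x) <= (1 + g) * ((p - 1) * eta1 p) + (1 + g) * ((p - 1) * e))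
  by (rewrite <- Rmult_plus_distr_l; apply Rmult_le_compat_l; lra).
lra.
Qed.

Lemma limit1_in_ext_on f g D l x0 : (forall x, D x -> f x = g x) ->
  limit1_in f D l x0 -> limit1_in g D l x0.
Proof.
intros Hfg Hf e He. destruct (Hf e He) as [d [Hd H]]. exists d; split; auto.
intros x [Dx Hx]. rewrite <- Hfg by auto. apply H; split; auto.
Qed.

Lemma limit1_in_continuity_pt h D x0 : continuity_pt h x0 -> limit1_in h D (h x0) x0.
Proof.
intros Hh e He. destruct (continuity_pt_ball h x0 Hh e He) as [d [Hd H]].
exists d; split; auto. intros x [_ Hx]. apply H, Hx.
Qed.

Lemma limit1_in_comp f g D l x0 : limit1_in f D l x0 -> continuity_pt g l ->
  limit1_in (fun x => g (f x)) D (g l) x0.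
Proof.
intros Hf Hg e He. destruct (continuity_pt_ball g l Hg e He) as [d [Hd H]].
destruct (Hf d Hd) as [d' [Hd' H']]. exists d'; split; auto.
intros x Hx. apply H, H', Hx.
Qed.

Lemma limit1_in_of_ratio h D x0 : 0 < h x0 ->
  (forall g, 0 < g <= 1 -> exists d, 0 < d /\
     forall x, D x -> Rabs (x - x0) < d -> h x <= (1 + g) * h x0 /\ h x0 <= (1 + g) * h x) ->
  limit1_in h D (h x0) x0.
Proof.
intros Hh0 Hratio e He.
set (g := Rmin 1 (e / (4 * h x0))).
assert (Hg : 0 < g <= 1 /\ g * h x0 <= e / 4).
{ assert (0 < e / (4 * h x0)) by (apply Rdiv_lt_0_compat; lra).
  pose proof (Rmin_r 1 (e / (4 * h x0))). fold g in H0.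
  split; [split; [apply Rmin_pos; lra|apply Rmin_l]|]. apply Rle_div_r in H0; lra. }
destruct (Hratio g (proj1 Hg)) as [d [Hd H]]. exists d; split; auto.
intros x [Dx Hx]. destruct (H x Dx Hx) as [Hup Hlow].
change (Rabs (h x - h x0) < e). apply Rabs_def1; nra.
Qed.

Lemma scaled_eta1_continuous p0 : 2 <= p0 ->
  limit1_in (fun p => (p - 1) * eta1 p) (fun p => 2 <= p) ((p0 - 1) * eta1 p0) p0.
Proof.
intro Hp0. pose proof (eta1_pos p0 Hp0) as Hpos.
apply (limit1_in_of_ratio (fun p => (p - 1) * eta1 p)); [cbv beta; nra|].
intros g Hg. set (Qm := 2 * ((p0 - 1) * eta1 p0) + 1).
destruct (eta1_transfer (p0 + 1) Qm g ltac:(lra) ltac:(unfold Qm; nra) Hg) as [d [Hd Htr]].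
exists (Rmin d 1). split; [apply Rmin_pos; lra|].
intros q Hq Hqd. pose proof (Rmin_l d 1). pose proof (Rmin_r d 1).
pose proof (Rabs_def2 (q - p0) 1 ltac:(lra)).
assert (Hup : (q - 1) * eta1 q <= (1 + g) * ((p0 - 1) * eta1 p0)) by (apply Htr; try lra; unfold Qm; nra).
split; auto. apply Htr; try lra.
- rewrite Rabs_minus_sym. lra.
- assert (0 < (p0 - 1) * eta1 p0) by nra. unfold Qm. nra.
Qed.

Lemma eta1_continuous p0 : 2 <= p0 -> limit1_in eta1 (fun p => 2 <= p) (eta1 p0) p0.
Proof.
intro Hp0.
replace (eta1 p0) with (/ (p0 - 1) * ((p0 - 1) * eta1 p0)) by (field; lra).
apply (limit1_in_ext_on (fun p => / (p - 1) * ((p - 1) * eta1 p))); [intros; field; lra|].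
apply limit_mul; [|apply scaled_eta1_continuous; auto].
apply (limit1_in_continuity_pt (fun p => / (p - 1))).
apply derivable_continuous_pt. eexists. apply is_derive_Reals. auto_derive; [lra|reflexivity].
Qed.

Theorem lemma2p7 :
  forall p0 : R, 2 <= p0 -> limit1_in mu1 (fun p => 2 <= p) (mu1 p0) p0.
Proof.
intros p0 Hp0. unfold mu1, Rpower.
apply (limit1_in_comp (fun p => 1 / (p - 1) * ln (eta1 p)) exp);
  [|apply derivable_continuous_pt, derivable_pt_exp].
apply limit_mul.
- apply (limit1_in_continuity_pt (fun p => 1 / (p - 1))).
  apply derivable_continuous_pt. eexists. apply is_derive_Reals. auto_derive; [lra|reflexivity].
- apply (limit1_in_comp eta1 ln); [apply eta1_continuous; auto|].
  apply derivable_continuous_pt. exists (/ eta1 p0). apply derivable_pt_lim_ln, eta1_pos; auto.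
Qed.
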